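(* Let $n\ge 2$. For any two locally valid MV assignments $\mu_1,\mu_2$ of $M_{2,n}$ there exist proper $3$-colorings $\gamma,\beta$ of $M^*_{2,n}$ corresponding to $\mu_1,\mu_2$ respectively such that $$\min_{H\in 2\mathbb{Z}}\ \frac12\sum_{v\in V(M^*_{2,n})}\bigl|H+h_{\gamma,v_{1,1}}(\beta,v)\bigr|\le\left\lceil \frac{n^2}{2}\right\rceil .$$ Consequently the distance between $\mu_1$ and $\mu_2$ in ${\rm OFG}(M_{2,n})$ is at most $\lceil n^2/2\rceil$, the distance between two opposite vertices of degree $2$; that is, a pair of vertices at maximal distance is formed by two opposite degree-$2$ vertices.
   Context: The $2\times n$ Miura-ori $M_{2,n}$ has faces $\alpha_{i,j}$ ($i\in\{1,2\}$, $j\in\{1,\dots,n\}$), interior vertices $x_1,\dots,x_{n-1}$, creases $e_0$ and $e_{3k-1},e_{3k},e_{3k+1}$ ($k=1,\dots,n-1$); at $x_k$ the creases are left $e_{3k-3}$, top $e_{3k-1}$, right $e_{3k}$, bottom $e_{3k+1}$. Face $\alpha_{1,j}$ is bordered by those of $e_{3j-4}$ (iff $j\ge2$), $e_{3j-3}$, $e_{3j-1}$ (iff $j\le n-1$); $\alpha_{2,j}$ by those of $e_{3j-2}$ (iff $j\ge2$), $e_{3j-3}$, $e_{3j+1}$ (iff $j\le n-1$). An MV assignment $\mu$ maps creases to $\{1,-1\}$; it is locally valid if for each $k$ exactly one of $\mu(e_{3k-1}),\mu(e_{3k}),\mu(e_{3k+1})$ differs from $\mu(e_{3k-3})$. The face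 flip $\mu_\alpha$ negates $\mu$ on the creases bordering $\alpha$; $\alpha$ is flippable if $\mu,\mu_\alpha$ are both locally valid. ${\rm OFG}(M_{2,n})$ has the locally valid assignments as vertices, $\mu\sim\mu_\alpha$ for flippable $\alpha$. Opposite assignments: same flippable faces and opposite parity on every crease (i.e., $\mu$ and $-\mu$). $M^*_{2,n}$ is the grid graph on $v_{i,j}$ ($i\in\{1,2\}$, $1\le j\le n$), $v_{i,j}$ adjacent to $v_{i,j\pm1}$, $v_{3-i,j}$; colors in $\mathbb{Z}_3$. A proper $3$-coloring $\gamma$ corresponds to $\mu$ if, mod $3$: $\gamma(v_{1,j+1})=\gamma(v_{1,j})+\mu(e_{3j-1})$ for $1\le j\le n-1$; $\gamma(v_{2,n})=\gamma(v_{1,n})+\mu(e_{3n-3})$; $\gamma(v_{2,j-1})=\gamma(v_{2,j})+\mu(e_{3j-2})$ for $2\le j\le n$ (each locally valid $\mu$ corresponds to exactly three colorings, one per value of $\gamma(v_{1,1})$). Edge weight $w(\gamma,\overrightarrow{ab})\in\{1,-1\}$ with $w\equiv\gamma(b)-\gamma(a)$ mod $3$; path weight is the sum of edge weights (path independent). Relative height $h_{\gamma,u}(\beta,v)=w(\beta,P_{u,v})-w(\gamma,P_{u,v})$ for a directed path $P_{u,v}$ from $u$ to $v$. *)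

From HB Require Import structures.
From mathcomp Require Import all_boot all_order all_algebra.
Set Implicit Arguments. Unset Strict Implicit. Unset Printing Implicit Defensive.
Import Order.TTheory GRing.Theory Num.Theory.

(* Crease e_i is encoded by the natural number i.  The creases of M_{2,n} are
   e_0 and e_{3k-1}, e_{3k}, e_{3k+1} for 1 <= k <= n-1. *)
Definition is_crease (n e : nat) : bool := (e == 0) || (2 <= e <= 3 * n - 2).

(* An MV assignment: true = +1, false = -1 (only its values on creases matter). *)
Definition mv_assignment := nat -> bool.

Definition mv_val (b : bool) : int := if b then 1%R else (-1)%R.

(* local validity at every interior vertex x_k, 1 <= k <= n-1:
   exactly one of mu(e_{3k-1}), mu(e_{3k}), mu(e_{3k+1}) differs from mu(e_{3k-3}) *)
Definition locally_valid (n : nat) (mu : mv_assignment) : bool :=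
  [forall k : 'I_n, (0 < k) ==>
     (((mu (3 * k - 1) != mu (3 * k - 3)) : nat)
      + ((mu (3 * k) != mu (3 * k - 3)) : nat)
      + ((mu (3 * k + 1) != mu (3 * k - 3)) : nat) == 1)].

Definition is_face (n i j : nat) : bool := ((i == 1) || (i == 2)) && (1 <= j <= n).

Definition borders (n i j e : nat) : bool :=
  if i == 1 then
    ((2 <= j) && (e == 3 * j - 4)) || (e == 3 * j - 3) || ((j <= n - 1) && (e == 3 * j - 1))
  else
    ((2 <= j) && (e == 3 * j - 2)) || (e == 3 * j - 3) || ((j <= n - 1) && (e == 3 * j + 1)).

Definition face_flip (n i j : nat) (mu : mv_assignment) : mv_assignment :=
  fun e => if borders n i j e then ~~ mu e else mu e.

Definition flippable (n : nat) (mu : mv_assignment) (i j : nat) : bool :=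
  [&& is_face n i j, locally_valid n mu & locally_valid n (face_flip n i j mu)].

Definition ofg_degree (n : nat) (mu : mv_assignment) : nat :=
  \sum_(i < 2) \sum_(j < n) (flippable n mu i.+1 j.+1 : nat).

Definition same_vertex (n : nat) (mu nu : mv_assignment) : Prop :=
  forall e, is_crease n e -> mu e = nu e.

Fixpoint ofg_walk (n k : nat) (mu nu : mv_assignment) : Prop :=
  match k with
  | 0 => same_vertex n mu nu
  | k'.+1 => exists i j, flippable n mu i j /\ ofg_walk n k' (face_flip n i j mu) nu
  end.

Definition ofg_dist_le (n : nat) (mu nu : mv_assignment) (d : nat) : Prop :=
  exists k, k <= d /\ ofg_walk n k mu nu.

Definition ofg_dist (n : nat) (mu nu : mv_assignment) (d : nat) : Prop :=
  ofg_dist_le n mu nu d /\ forall k, ofg_walk n k mu nu -> d <= k.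

Definition opposite (mu : mv_assignment) : mv_assignment := fun e => ~~ mu e.

(* gamma i j is the colour of v_{i,j} (i in {1,2}, 1 <= j <= n), colours in Z_3 *)
Definition coloring := nat -> nat -> 'Z_3.

Definition proper_coloring (n : nat) (g : coloring) : Prop :=
  (forall i j, 1 <= i <= 2 -> 1 <= j -> j < n -> g i j != g i j.+1) /\
  (forall j, 1 <= j <= n -> g 1 j != g 2 j).

Definition z3_of (b : bool) : 'Z_3 := if b then 1%R else (-1)%R.

Definition corresponds (n : nat) (g : coloring) (mu : mv_assignment) : Prop :=
  (forall j, 1 <= j <= n - 1 -> g 1 j.+1 = (g 1 j + z3_of (mu (3 * j - 1)%N))%R) /\
  g 2 n = (g 1 n + z3_of (mu (3 * n - 3)%N))%R /\
  (forall j, 2 <= j <= n -> g 2 j.-1 = (g 2 j + z3_of (mu (3 * j - 2)%N))%R).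

Definition edge_weight (g : coloring) (a1 a2 b1 b2 : nat) : int :=
  if (g b1 b2 - g a1 a2 == 1)%R then 1%R else (-1)%R.

Definition path_weight (g : coloring) (i j : nat) : int :=
  (\sum_(1 <= k < j) edge_weight g 1 k 1 k.+1
   + (if i == 2 then edge_weight g 1 j 2 j else 0))%R.

Definition rel_height (g b : coloring) (i j : nat) : int :=
  (path_weight b i j - path_weight g i j)%R.

Definition height_cost (n : nat) (g b : coloring) (H : int) : rat :=
  ((1 / 2) * (\sum_(i < 2) \sum_(j < n) `|H + rel_height g b i.+1 j.+1|)%:~R)%R.

Definition ceil_half_sq (n : nat) : int := Num.ceil (((n ^ 2)%:R / 2 : rat))%R.

(* A locally valid assignment is the gradient of a height function on the dual grid: the
   weight [height mu i j] of a path from v_{1,1} to v_{i,j}, which has the parity of [i + j].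
   A face is flippable exactly when its vertex is a local extremum of the height, and the flip
   moves that value by 2 across its neighbours. Hence a walk of length k changes the gap
   [sum_v |H + h_nu v - h_mu v|] by at most 2k, while flipping a vertex where the difference is
   extremal lowers it by exactly 2: the distance is half the least gap over even shifts [H].
   Halving the difference, the column sums form a 2-Lipschitz sequence, and centring it at the
   median column bounds the gap by [2 ceil(n^2/2)]. A degree-2 assignment has affine heights, as
   only the end columns contain flippable faces, and against its opposite the bound is attained. *)

From mathcomp Require Import all_boot all_order all_algebra.
From mathcomp Require Import zify ring.
Import Order.TTheory GRing.Theory Num.Theory.
Set Implicit Arguments. Unset Strict Implicit. Unset Printing Implicit Defensive.
Local Open Scope ring_scope.
Set Bullet Behavior "Strict Subproofs".

Lemma mv_val_pm b : mv_val b = 1 \/ mv_val b = -1.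
Proof. by case: b; [left | right]. Qed.

Lemma mv_valN b : mv_val (~~ b) = - mv_val b.
Proof. by case: b. Qed.

Lemma mv_val_inj : injective mv_val.
Proof. by do 2 case. Qed.

Lemma one_differs_sum a b c d :
  (((b != a) : nat) + ((c != a) : nat) + ((d != a) : nat) == 1)%N
  = (mv_val b + mv_val c + mv_val d == mv_val a).
Proof. by case: a; case: b; case: c; case: d. Qed.

Lemma locally_validP n mu : locally_valid n mu <->
  (forall k, (1 <= k < n)%N ->
     mv_val (mu (3 * k - 1)%N) + mv_val (mu (3 * k)%N) + mv_val (mu (3 * k + 1)%N)
     = mv_val (mu (3 * k - 3)%N)).
Proof.
split=> [/forallP V k /andP[k1 kn] | V].
  by have /implyP/(_ k1) := V (Ordinal kn); rewrite one_differs_sum => /eqP.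
apply/forallP=> k; apply/implyP=> k1.
by rewrite one_differs_sum; apply/eqP/V; rewrite k1 ltn_ord.
Qed.

Lemma locally_valid_opposite n mu : locally_valid n mu -> locally_valid n (opposite mu).
Proof.
move=> /locally_validP V; apply/locally_validP=> k kn.
by rewrite /opposite !mv_valN -V // !opprD.
Qed.

(** * Height functions *)

Definition height (mu : mv_assignment) (i j : nat) : int :=
  \sum_(1 <= k < j) mv_val (mu (3 * k - 1)%N)
  + (if i == 2%N then mv_val (mu (3 * j - 3)%N) else 0).

(* The orientation of the edges matches [corresponds]: the bottom row is read right to left. *)
Definition is_height n mu (f : nat -> nat -> int) : Prop :=
  [/\ forall j, (1 <= j < n)%N -> f 1%N j.+1 - f 1%N j = mv_val (mu (3 * j - 1)%N),
      forall j, (1 <= j <= n)%N -> f 2%N j - f 1%N j = mv_val (mu (3 * j - 3)%N) &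
      forall j, (1 <= j < n)%N -> f 2%N j - f 2%N j.+1 = mv_val (mu (3 * j + 1)%N)].

Section Height.

Variable mu : mv_assignment.

Lemma height11 : height mu 1 1 = 0.
Proof. by rewrite /height big_geq. Qed.

Lemma height1S j : (1 <= j)%N -> height mu 1 j.+1 = height mu 1 j + mv_val (mu (3 * j - 1)%N).
Proof. by move=> j1; rewrite /height !addr0 big_nat_recr. Qed.

Lemma height2 j : height mu 2 j = height mu 1 j + mv_val (mu (3 * j - 3)%N).
Proof. by rewrite /height addr0. Qed.

Lemma height_opposite i j : height (opposite mu) i j = - height mu i j.
Proof.
rewrite /height /opposite; under eq_bigr do rewrite mv_valN.
by rewrite sumrN opprD; case: ifP; rewrite ?mv_valN ?oppr0.
Qed.

Lemma height_parity i j : (1 <= i <= 2)%N -> (1 <= j)%N ->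
  exists q : int, height mu i j = 2 * q + (i + j)%:Z.
Proof.
have row1 j' : (1 <= j')%N -> exists q : int, height mu 1 j' = 2 * q + (1 + j')%:Z.
  elim: j' => [|[|j'] IH] // _; first by exists (-1); rewrite height11.
  rewrite height1S //; have [q ->] := IH isT.
  by case: (mv_val_pm (mu (3 * j'.+1 - 1)%N)) => ->; [exists q | exists (q - 1)]; lia.
move=> ir j1; have [-> | ->] : (i = 1 \/ i = 2)%N by lia.
  exact: row1.
rewrite height2; have [q ->] := row1 j j1.
by case: (mv_val_pm (mu (3 * j - 3)%N)) => ->; [exists q | exists (q - 1)]; lia.
Qed.

Variable n : nat.

Lemma height_is_height : locally_valid n mu -> is_height n mu (height mu).
Proof.
move=> /locally_validP V; split=> j jr.
- by rewrite height1S; [ring | lia].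
- by rewrite height2; ring.
- rewrite !height2 height1S; last lia.
  rewrite (_ : (3 * j.+1 - 3 = 3 * j)%N); last lia.
  by rewrite -V //; ring.
Qed.

(* Around x_k the four dual edges form a cycle, on which a height function sums to zero. *)
Lemma is_height_locally_valid f : is_height n mu f -> locally_valid n mu.
Proof.
case=> R1 R2 R3; apply/locally_validP=> k /andP[k1 kn].
rewrite -R1 ?k1 // -R3 ?k1 // -R2 ?k1 ?(ltnW kn) //.
have -> : (3 * k = 3 * k.+1 - 3)%N by lia.
rewrite -R2 ?kn //; ring.
Qed.

Lemma is_height_unique f : is_height n mu f ->
  forall i j, (1 <= i <= 2)%N -> (1 <= j <= n)%N -> f i j - f 1%N 1%N = height mu i j.
Proof.
case=> R1 R2 _.
have row1 j : (1 <= j <= n)%N -> f 1%N j - f 1%N 1%N = height mu 1 j.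
  elim: j => [|[|j] IH] //; first by rewrite height11 subrr.
  move=> /andP[_ jn]; rewrite height1S // -R1 ?(ltnW jn) // -IH ?(ltnW jn) //; ring.
move=> i j ir jr; have [-> | ->] : (i = 1 \/ i = 2)%N by lia.
  exact: row1.
by rewrite height2 -row1 // -R2 //; ring.
Qed.

Lemma height_eq_of_same_vertex nu : same_vertex n mu nu ->
  forall i j, (1 <= j <= n)%N -> height mu i j = height nu i j.
Proof.
move=> S i j jr; rewrite /height; congr (_ + _).
  by apply: eq_big_nat => k kr; rewrite S // /is_crease; lia.
by case: ifP => // _; rewrite S // /is_crease; lia.
Qed.

Lemma same_vertex_of_is_height nu f : (1 <= n)%N ->
  is_height n mu f -> is_height n nu f -> same_vertex n mu nu.
Proof.
move=> n1 [A1 A2 A3] [B1 B2 B3] e /orP[/eqP-> | er].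
  by apply: mv_val_inj; rewrite -[0%N]/(3 * 1 - 3)%N -A2 ?n1 // -B2 ?n1.
have [m0 | [m1 | m2]] : (e %% 3 = 0 \/ e %% 3 = 1 \/ e %% 3 = 2)%N by lia.
- have -> : e = (3 * (e %/ 3).+1 - 3)%N by lia.
  by apply: mv_val_inj; rewrite -A2 -?B2 //; lia.
- have -> : e = (3 * (e %/ 3) + 1)%N by lia.
  by apply: mv_val_inj; rewrite -A3 -?B3 //; lia.
- have -> : e = (3 * (e %/ 3).+1 - 1)%N by lia.
  by apply: mv_val_inj; rewrite -A1 -?B1 //; lia.
Qed.

End Height.

(** * Face flips *)

Definition local_extremum n (f : nat -> nat -> int) i j (s : int) : Prop :=
  [/\ (1 < j)%N -> f i j.-1 - f i j = s, (j < n)%N -> f i j.+1 - f i j = s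
    & f (3 - i)%N j - f i j = s].

Definition add_at (f : nat -> nat -> int) i j (c : int) : nat -> nat -> int :=
  fun i' j' => if ((i' == i) && (j' == j))%N then f i' j' + c else f i' j'.

Lemma face_flip_val n i j mu e : mv_val (face_flip n i j mu e) =
  if borders n i j e then - mv_val (mu e) else mv_val (mu e).
Proof. by rewrite /face_flip; case: ifP; rewrite ?mv_valN. Qed.

Section Borders.

Variables n i j k : nat.
Hypotheses (ir : (1 <= i <= 2)%N) (jr : (1 <= j <= n)%N).

Lemma borders_row1 : (1 <= k < n)%N ->
  borders n i j (3 * k - 1)%N = (i == 1%N) && ((j == k) || (j == k.+1)).
Proof.
move=> kr; have [-> | ->] : (i = 1 \/ i = 2)%N by lia.
all: by rewrite /borders /=; lia.
Qed.

Lemma borders_col : (1 <= k <= n)%N -> borders n i j (3 * k - 3)%N = (j == k).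
Proof.
move=> kr; have [-> | ->] : (i = 1 \/ i = 2)%N by lia.
all: by rewrite /borders /=; lia.
Qed.

Lemma borders_row2 : (1 <= k < n)%N ->
  borders n i j (3 * k + 1)%N = (i == 2%N) && ((j == k) || (j == k.+1)).
Proof.
move=> kr; have [-> | ->] : (i = 1 \/ i = 2)%N by lia.
all: by rewrite /borders /=; lia.
Qed.

End Borders.

Ltac case_ifs :=
  repeat match goal with |- context [if ?c then _ else _] => case: (boolP c) => ? end;
  repeat match goal with
  | H : is_true (_ == _) |- _ => move/eqP: H => H; subst
  | H : is_true (_ && _) |- _ => case/andP: H => ? ?
  | H : is_true (_ || _) |- _ => case/orP: H => ?
  end.

Lemma is_height_flip n mu f i j s : (1 <= i <= 2)%N -> (1 <= j <= n)%N ->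
  is_height n mu f -> local_extremum n f i j s ->
  is_height n (face_flip n i j mu) (add_at f i j (2 * s)).
Proof.
move=> ir jr [R1 R2 R3] [E1 E2 E3]; split=> k kr; rewrite face_flip_val /add_at;
  [rewrite borders_row1 // -R1 // | rewrite borders_col // -R2 // |
   rewrite borders_row2 // -R3 //].
all: have [? | ?] : (i = 1 \/ i = 2)%N by lia.
all: subst i; rewrite -?[(3 - 1)%N]/2%N -?[(3 - 2)%N]/1%N in E3.
all: by case_ifs; simpl in *; lia.
Qed.

Ltac decide_ifs := repeat match goal with
  |- context [if ?c then _ else _] =>
     first [have -> : c = true by lia | have -> : c = false by lia] end.

(* Validity of both [mu] and the flipped assignment at a vertex x_k of the face forces the two
   creases of the face at x_k to cancel in the cycle sum. *)
Lemma flippable_local_extremum n mu i j : locally_valid n mu ->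
  (1 <= i <= 2)%N -> (1 <= j <= n)%N -> locally_valid n (face_flip n i j mu) ->
  local_extremum n (height mu) i j (height mu (3 - i) j - height mu i j).
Proof.
move=> V ir jr V'; have [R1 R2 R3] := height_is_height V.
move/locally_validP in V; move/locally_validP in V'.
have [? | ?] : (i = 1 \/ i = 2)%N by lia.
all: subst i; split=> // [j1 | jn].
1,3: case: j jr j1 V' => // k kr k1 V'; have := R2 k.+1 kr;
  rewrite (_ : (3 * k.+1 - 3 = 3 * k)%N) /=; last lia;
  have := V k (ltac:(lia)); have := V' k (ltac:(lia));
  have := R1 k (ltac:(lia)); have := R2 k (ltac:(lia)); have := R3 k (ltac:(lia)).
3,4: have := V j (ltac:(lia)); have := V' j (ltac:(lia));
  have := R1 j (ltac:(lia)); have := R2 j (ltac:(lia)); have := R2 j.+1 (ltac:(lia));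
  have := R3 j (ltac:(lia)); rewrite (_ : (3 * j.+1 - 3 = 3 * j)%N); last lia.
all: rewrite -?[(3 - 1)%N]/2%N -?[(3 - 2)%N]/1%N !face_flip_val /borders /=.
all: by decide_ifs; lia.
Qed.

Lemma height_steps n mu i j : locally_valid n mu -> (1 <= i <= 2)%N -> (1 <= j <= n)%N ->
  [/\ (1 < j)%N -> height mu i j.-1 - height mu i j = 1 \/ height mu i j.-1 - height mu i j = -1,
      (j < n)%N -> height mu i j.+1 - height mu i j = 1 \/ height mu i j.+1 - height mu i j = -1
    & height mu (3 - i) j - height mu i j = 1 \/ height mu (3 - i) j - height mu i j = -1].
Proof.
move=> V ir jr; have [R1 R2 R3] := height_is_height V.
have [-> | ->] : (i = 1 \/ i = 2)%N by lia.
all: rewrite -?[(3 - 1)%N]/2%N -?[(3 - 2)%N]/1%N; split=> [j1 | jn |].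
- have := R1 j.-1 (ltac:(lia)); rewrite prednK; last lia.
  by have := mv_val_pm (mu (3 * j.-1 - 1)%N); lia.
- by have := R1 j (ltac:(lia)); have := mv_val_pm (mu (3 * j - 1)%N); lia.
- by have := R2 j jr; have := mv_val_pm (mu (3 * j - 3)%N); lia.
- have := R3 j.-1 (ltac:(lia)); rewrite prednK; last lia.
  by have := mv_val_pm (mu (3 * j.-1 + 1)%N); lia.
- by have := R3 j (ltac:(lia)); have := mv_val_pm (mu (3 * j + 1)%N); lia.
- by have := R2 j jr; have := mv_val_pm (mu (3 * j - 3)%N); lia.
Qed.

Lemma local_extremum_sign n mu i j s : locally_valid n mu ->
  (1 <= i <= 2)%N -> (1 <= j <= n)%N -> local_extremum n (height mu) i j s -> s = 1 \/ s = -1.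
Proof. by move=> V ir jr [_ _ <-]; have [_ _] := height_steps V ir jr. Qed.

Lemma flippableP n mu i j : locally_valid n mu -> (1 <= i <= 2)%N -> (1 <= j <= n)%N ->
  flippable n mu i j <-> exists s, local_extremum n (height mu) i j s.
Proof.
move=> V ir jr; split=> [/and3P[_ _ V'] | [s E]].
  by eexists; apply: flippable_local_extremum.
apply/and3P; split=> //; first by rewrite /is_face; lia.
exact: is_height_locally_valid (is_height_flip ir jr (height_is_height V) E).
Qed.

Lemma height_flip n mu i j s : locally_valid n mu -> (1 <= i <= 2)%N -> (1 <= j <= n)%N ->
  local_extremum n (height mu) i j s ->
  forall i' j', (1 <= i' <= 2)%N -> (1 <= j' <= n)%N ->
  height (face_flip n i j mu) i' j'
  = add_at (height mu) i j (2 * s) i' j' - add_at (height mu) i j (2 * s) 1 1.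
Proof.
move=> V ir jr E i' j' ir' jr'.
by rewrite -(is_height_unique (is_height_flip ir jr (height_is_height V) E)).
Qed.

(** * The height gap *)

Definition height_diff (mu nu : mv_assignment) (H : int) i j : int :=
  H + height nu i j - height mu i j.

Definition height_gap n (mu nu : mv_assignment) (H : int) : int :=
  \sum_(p : 'I_2 * 'I_n) `|height_diff mu nu H p.1.+1 p.2.+1|.

Lemma vertex_ord n i j : (1 <= i <= 2)%N -> (1 <= j <= n)%N ->
  exists q : 'I_2 * 'I_n, i = q.1.+1 /\ j = q.2.+1.
Proof.
move=> ir jr; have i2 : (i.-1 < 2)%N by lia.
have jn : (j.-1 < n)%N by lia.
by exists (Ordinal i2, Ordinal jn) => /=; lia.
Qed.

Lemma ord_vertex n (q : 'I_2 * 'I_n) : (1 <= q.1.+1 <= 2)%N /\ (1 <= q.2.+1 <= n)%N.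
Proof. by case: q => [[a a2] [b bn]] /=; lia. Qed.

Lemma add_at_ord n f (p q : 'I_2 * 'I_n) c : add_at f q.1.+1 q.2.+1 c p.1.+1 p.2.+1
  = if p == q then f p.1.+1 p.2.+1 + c else f p.1.+1 p.2.+1.
Proof. by case: p q => [a b] [a' b']; rewrite /add_at xpair_eqE !eqSS. Qed.

Lemma height_diff_ge_gap n mu nu H (p : 'I_2 * 'I_n) :
  `|height_diff mu nu H p.1.+1 p.2.+1| <= height_gap n mu nu H.
Proof. by rewrite /height_gap (bigD1 p) //= lerDl sumr_ge0. Qed.

Lemma height_diff_even mu nu H i j : (1 <= i <= 2)%N -> (1 <= j)%N ->
  exists r : int, height_diff mu nu (2 * H) i j = 2 * r.
Proof.
move=> ir j1; have [a Ea] := height_parity mu ir j1; have [b Eb] := height_parity nu ir j1.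
by exists (H + b - a); rewrite /height_diff Ea Eb; ring.
Qed.

(* A flip changes the gap only at the flipped vertex, up to a global even shift
   when the flipped vertex is the base point v_{1,1}. *)
Lemma height_gap_flip n mu nu (q : 'I_2 * 'I_n) s : locally_valid n mu ->
  local_extremum n (height mu) q.1.+1 q.2.+1 s ->
  exists c : int, forall H : int,
    height_gap n (face_flip n q.1.+1 q.2.+1 mu) nu (H + 2 * c)
    = height_gap n mu nu H - `|height_diff mu nu H q.1.+1 q.2.+1|
      + `|height_diff mu nu H q.1.+1 q.2.+1 - 2 * s|.
Proof.
move=> V E; have [ir jr] := ord_vertex q.
have [b Eb] : exists b : int, add_at (height mu) q.1.+1 q.2.+1 (2 * s) 1 1 = 2 * b.
  by rewrite /add_at height11; case: ifP => _; [exists s | exists 0]; ring.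
have flipE (p : 'I_2 * 'I_n) : height (face_flip n q.1.+1 q.2.+1 mu) p.1.+1 p.2.+1
    = add_at (height mu) q.1.+1 q.2.+1 (2 * s) p.1.+1 p.2.+1 - 2 * b.
  by have [ir' jr'] := ord_vertex p; rewrite -Eb (height_flip V ir jr E).
exists (- b) => H; rewrite /height_gap (bigD1 q) //= [in RHS](bigD1 q) //=.
rewrite (eq_bigr (fun p : 'I_2 * 'I_n => `|height_diff mu nu H p.1.+1 p.2.+1|)); last first.
  by move=> p pq; rewrite /height_diff flipE add_at_ord (negbTE pq); congr `|_|; ring.
rewrite /height_diff flipE add_at_ord eqxx; set S := \sum_(i | _) _; lia.
Qed.

Lemma ofg_walk_height_gap n k mu nu : locally_valid n mu -> ofg_walk n k mu nu ->
  exists H, height_gap n mu nu H <= 2 * k%:Z.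
Proof.
elim: k mu => [|k IH] mu V /= => [S | [i [j [F W]]]].
  exists 0; rewrite mulr0 /height_gap big1 // => p _; have [_ jr] := ord_vertex p.
  by rewrite /height_diff add0r (height_eq_of_same_vertex S) ?subrr.
have /and3P[Fij _ V'] := F.
have [ir jr] : (1 <= i <= 2)%N /\ (1 <= j <= n)%N by move: Fij; rewrite /is_face; lia.
have [s E] := (flippableP V ir jr).1 F.
have pm := local_extremum_sign V ir jr E.
have [q [Ei Ej]] := vertex_ord ir jr; subst i j.
have [c Ec] := height_gap_flip nu V E.
have [H HW] := IH _ V' W.
exists (H - 2 * c); move: HW; rewrite -[in height_gap _ _ _ H](subrK (2 * c) H) Ec.
set D := height_diff _ _ _ _ _; set G := height_gap _ _ _ _; lia.
Qed.

(* Both heights move by [+-1] along an edge, so a neighbour lying [s] below in [height mu] would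
   be at least as extremal for the difference and lower in [s * height mu]. *)
Lemma local_extremum_of_extremal_diff n mu nu H s i j :
  locally_valid n mu -> locally_valid n nu -> s = 1 \/ s = -1 ->
  (1 <= i <= 2)%N -> (1 <= j <= n)%N ->
  (forall i' j', (1 <= i' <= 2)%N -> (1 <= j' <= n)%N ->
     s * height_diff mu nu H i' j' <= s * height_diff mu nu H i j) ->
  (forall i' j', (1 <= i' <= 2)%N -> (1 <= j' <= n)%N ->
     s * height_diff mu nu H i' j' = s * height_diff mu nu H i j ->
     s * height mu i j <= s * height mu i' j') ->
  local_extremum n (height mu) i j s.
Proof.
move=> Vmu Vnu pm ir jr Dmax Hmin; rewrite /height_diff in Dmax Hmin.
have [A1 A2 A3] := height_steps Vmu ir jr; have [B1 B2 B3] := height_steps Vnu ir jr.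
split=> [j1 | jn |].
- have := Dmax i j.-1 ir (ltac:(lia)); have := Hmin i j.-1 ir (ltac:(lia)).
  have := A1 j1; have := B1 j1; set x := height nu i j.-1; set z := height mu i j.-1.
  by case: pm => ->; lia.
- have := Dmax i j.+1 ir (ltac:(lia)); have := Hmin i j.+1 ir (ltac:(lia)).
  by have := A2 jn; have := B2 jn; case: pm => ->; lia.
- have := Dmax (3 - i)%N j (ltac:(lia)) jr; have := Hmin (3 - i)%N j (ltac:(lia)) jr.
  by case: pm => ->; lia.
Qed.

Lemma exists_gap_reducing_flip n mu nu H (p : 'I_2 * 'I_n) :
  locally_valid n mu -> locally_valid n nu -> height_diff mu nu H p.1.+1 p.2.+1 != 0 ->
  exists q : 'I_2 * 'I_n, exists2 s : int, s = 1 \/ s = -1 &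
    local_extremum n (height mu) q.1.+1 q.2.+1 s /\ 0 < s * height_diff mu nu H q.1.+1 q.2.+1.
Proof.
move=> Vmu Vnu Dp; pose D (p : 'I_2 * 'I_n) := height_diff mu nu H p.1.+1 p.2.+1.
have [s pm sDp] : exists2 s : int, s = 1 \/ s = -1 & 0 < s * D p.
  by case: (ltrP 0 (D p)) => Dpos; [exists 1 | exists (-1)]; move: Dpos Dp; rewrite /D; lia.
have [pmax _ Dmax] := @arg_maxP _ _ _ p predT (fun p => s * D p) isT.
have [q /eqP Dq Hmin] := @arg_minP _ _ _ pmax [pred p | s * D p == s * D pmax]
  (fun p => s * height mu p.1.+1 p.2.+1) (eqxx _).
exists q, s => //; split; last by rewrite -/(D q) Dq; exact: lt_le_trans sDp (Dmax p isT).
have [ir jr] := ord_vertex q.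
apply: (@local_extremum_of_extremal_diff n mu nu H s _ _ Vmu Vnu pm ir jr) => i' j' ir' jr'.
all: have [p' [-> ->]] := vertex_ord ir' jr'; rewrite -/(D p') -/(D q) Dq.
  exact: Dmax.
by move=> Dp'; apply: Hmin; rewrite /= Dp'.
Qed.

Lemma is_height_ext n mu f g : is_height n mu f ->
  (forall i j, (1 <= i <= 2)%N -> (1 <= j <= n)%N -> f i j = g i j) -> is_height n mu g.
Proof.
case=> R1 R2 R3 E; split=> j jr; rewrite -!E; try lia.
- exact: R1 jr.
- exact: R2 jr.
- exact: R3 jr.
Qed.

Lemma same_vertex_of_height_diff0 n mu nu H : (1 <= n)%N ->
  locally_valid n mu -> locally_valid n nu ->
  (forall p : 'I_2 * 'I_n, height_diff mu nu H p.1.+1 p.2.+1 = 0) -> same_vertex n mu nu.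
Proof.
move=> n1 Vmu Vnu D0; have := D0 (ord0, Ordinal n1); rewrite /height_diff /= !height11 => H0.
apply: (same_vertex_of_is_height n1 (height_is_height Vmu)).
apply: (is_height_ext (height_is_height Vnu)) => i j ir jr.
by have [p [-> ->]] := vertex_ord ir jr; have := D0 p; rewrite /height_diff; lia.
Qed.

(* The difference at the extremal vertex has the sign of the flip and is even, so the flip
   lowers the gap by exactly 2. *)
Lemma height_gap_ofg_walk n nu k : (1 <= n)%N -> locally_valid n nu ->
  forall mu (H : int), locally_valid n mu -> height_gap n mu nu (2 * H) <= 2 * k%:Z ->
  exists2 k', (k' <= k)%N & ofg_walk n k' mu nu.
Proof.
move=> n1 Vnu; elim: k => [|k IH] mu H Vmu gap_le.
all: case: (boolP [forall p : 'I_2 * 'I_n, height_diff mu nu (2 * H) p.1.+1 p.2.+1 == 0])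
  => [/forallP D0 | /forallPn[p /negP/negP Dp]].
1,3: by exists 0%N => //=; apply: (same_vertex_of_height_diff0 n1 Vmu Vnu) => p; apply/eqP.
  have := height_diff_ge_gap mu nu (2 * H) p; move: gap_le Dp.
  by set D := height_diff _ _ _ _ _; lia.
have [q [s pm [E sD]]] := exists_gap_reducing_flip Vmu Vnu Dp.
have [ir jr] := ord_vertex q.
have F : flippable n mu q.1.+1 q.2.+1 by apply/flippableP => //; exists s.
have [c Ec] := height_gap_flip nu Vmu E.
have [r Er] := height_diff_even mu nu H ir (isT : (1 <= q.2.+1)%N).
have /and3P[_ _ V'] := F.
have gap_le' : height_gap n (face_flip n q.1.+1 q.2.+1 mu) nu (2 * (H + c)) <= 2 * k%:Z.
  rewrite mulrDr Ec Er; move: gap_le sD; rewrite Er; set G := height_gap _ _ _ _.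
  by case: pm => ->; lia.
have [k' k'k W] := IH _ _ V' gap_le'.
by exists k'.+1 => //; exists q.1.+1, q.2.+1.
Qed.

(** * The bound ceil(n^2/2) *)

Definition half_sq_ceil (n : nat) : nat := ((n ^ 2).+1 %/ 2)%N.

Lemma ceil_half_sqE n : ceil_half_sq n = (half_sq_ceil n)%:Z.
Proof.
rewrite /ceil_half_sq /half_sq_ceil; apply: ceil_def.
rewrite ltr_pdivlMr ?ler_pdivrMr // -[(2 : rat)]/(2%:~R) -!intrM.
by rewrite -[((n ^ 2)%N%:R : rat)]/((n ^ 2)%N%:Z)%:~R ltr_int ler_int; lia.
Qed.

Lemma sum_odd a : \sum_(0 <= j < a) (2 * j%:Z + 1) = (a ^ 2)%N%:Z.
Proof.
elim: a => [|a IH]; first by rewrite big_geq.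
by rewrite big_nat_recr //= IH; lia.
Qed.

Lemma sum_even a : \sum_(0 <= j < a) (2 * j%:Z + 2) = (a * a.+1)%N%:Z.
Proof.
elim: a => [|a IH]; first by rewrite big_geq.
by rewrite big_nat_recr //= IH; lia.
Qed.

Lemma sum_abs_odd a b :
  \sum_(0 <= j < a + b) `|2 * j%:Z + 1 - 2 * a%:Z| = (a ^ 2 + b ^ 2)%N%:Z.
Proof.
elim: b => [|b IH]; last by rewrite addnS big_nat_recr //= IH; lia.
rewrite !addn0 big_nat_rev -sum_odd.
by apply: eq_big_nat => j jr; lia.
Qed.

Lemma sum_abs_even a b :
  \sum_(0 <= j < a + b) `|2 * j%:Z - 2 * a%:Z| = (a * a.+1 + b * b.-1)%N%:Z.
Proof.
elim: b => [|b IH]; last by rewrite addnS big_nat_recr //= IH; nia.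
rewrite mul0n !addn0 big_nat_rev -sum_even.
by apply: eq_big_nat => j jr; lia.
Qed.

Lemma median_column n : (2 <= n)%N -> exists2 k, (k.+1 < n)%N &
  (k * k.+1 + (n - k) * (n - k).-1 <= half_sq_ceil n)%N /\
  (k.+1 ^ 2 + (n - k.+1) ^ 2 <= half_sq_ceil n)%N.
Proof.
move=> n2; rewrite /half_sq_ceil.
have [p [En | En]] : exists p, n = p.*2 \/ n = p.*2.+1.
  by exists n./2; rewrite -{1 3}(odd_double_half n); case: (odd n); [right | left].
all: subst n.
- have -> : ((p.*2 ^ 2).+1 %/ 2 = 2 * p * p)%N by nia.
  case: p n2 => [// | q] n2; exists q; first lia.
  rewrite (_ : (q.+1.*2 - q = q.+2)%N); last lia.
  by rewrite (_ : (q.+1.*2 - q.+1 = q.+1)%N) /=; [split; nia | lia].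
- have -> : ((p.*2.+1 ^ 2).+1 %/ 2 = 2 * p * p + 2 * p + 1)%N by nia.
  exists p; first lia.
  rewrite (_ : (p.*2.+1 - p = p.+1)%N); last lia.
  by rewrite (_ : (p.*2.+1 - p.+1 = p)%N) /=; [split; nia | lia].
Qed.

Lemma lipschitz_dist n (u : nat -> int) : (forall j, (j.+1 < n)%N -> `|u j.+1 - u j| <= 2) ->
  forall j k, (j < n)%N -> (k < n)%N -> `|u j - u k| <= 2 * `|j%:Z - k%:Z|.
Proof.
move=> step.
have far d k : (k + d < n)%N -> `|u (k + d)%N - u k| <= 2 * d%:Z.
  elim: d => [|d IH] kd; first by rewrite addn0 subrr normr0 mulr0.
  by have := IH (ltac:(lia)); have := step (k + d)%N (ltac:(lia)); rewrite addnS; lia.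
move=> j k jn kn; case: (leqP k j) => kj.
  by have := far (j - k)%N k; rewrite subnKC // => /(_ jn); lia.
by have := far (k - j)%N j; rewrite subnKC ?(ltnW kj) // => /(_ kn); lia.
Qed.

(* Centre [u] at the median column [k]: if [u k] is even the terms are dominated by
   [|2j - 2k|], otherwise (after a shift making [u k] and [u (k+1)] equal to [+-1]) by
   [|2j + 1 - 2(k+1)|]. *)
Lemma exists_shift_sum_abs_le n (u : nat -> int) : (2 <= n)%N ->
  (forall j, (j.+1 < n)%N -> `|u j.+1 - u j| <= 2) ->
  exists m : int, \sum_(0 <= j < n) `|u j + 2 * m| <= (half_sq_ceil n)%:Z.
Proof.
move=> n2 step; have dist := lipschitz_dist step.
have [k kn [bound_even bound_odd]] := median_column n2.
have [a [Ea | Ea]] : exists a : int, u k = 2 * a \/ u k = 2 * a + 1.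
  by exists (u k %/ 2)%Z; lia.
- exists (- a); apply: le_trans (_ : \sum_(0 <= j < n) `|2 * j%:Z - 2 * k%:Z| <= _).
    by apply: ler_sum_nat => j jn; have := dist j k; lia.
  by have := sum_abs_even k (n - k); rewrite subnKC; lia.
- pose m := if u k <= u k.+1 then - (a + 1) else - a.
  have [uk uk1] : `|u k + 2 * m| <= 1 /\ `|u k.+1 + 2 * m| <= 1.
    by have := step k kn; rewrite /m; case: ifP; lia.
  exists m; apply: le_trans (_ : \sum_(0 <= j < n) `|2 * j%:Z + 1 - 2 * k.+1%:Z| <= _).
    by apply: ler_sum_nat => j jn; have := dist j k; have := dist j k.+1; clearbody m; lia.
  by have := sum_abs_odd k.+1 (n - k.+1); rewrite subnKC; lia.
Qed.

Lemma height_gap_columns n mu nu H : height_gap n mu nu H =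
  \sum_(0 <= j < n) (`|height_diff mu nu H 1 j.+1| + `|height_diff mu nu H 2 j.+1|).
Proof.
rewrite /height_gap -(pair_bigA _ (fun (i : 'I_2) (j : 'I_n) =>
  `|height_diff mu nu H i.+1 j.+1|)).
by rewrite big_ord_recr big_ord_recr big_ord0 /= add0r -big_split big_mkord.
Qed.

(* Halving the difference of two heights gives one integer per vertex; in each column the two
   halves differ by at most 1, so the column contributes twice the distance of their sum from
   [-2m], and the column sums form a 2-Lipschitz sequence. *)
Lemma exists_height_gap_le n mu nu : (2 <= n)%N -> locally_valid n mu -> locally_valid n nu ->
  exists m : int, height_gap n mu nu (2 * m) <= 2 * (half_sq_ceil n)%:Z.
Proof.
move=> n2 Vmu Vnu.
pose d i j := ((height nu i j - height mu i j) %/ 2)%Z.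
have Dd i j : (1 <= i <= 2)%N -> (1 <= j)%N -> height nu i j - height mu i j = 2 * d i j.
  move=> ir j1; have [a Ea] := height_parity mu ir j1; have [b Eb] := height_parity nu ir j1.
  by rewrite /d Ea Eb; lia.
have col j : (j < n)%N -> `|d 2%N j.+1 - d 1%N j.+1| <= 1.
  move=> jn; have jr : (1 <= j.+1 <= n)%N by lia.
  have [_ _] := height_steps Vmu (isT : (1 <= 1 <= 2)%N) jr.
  have [_ _] := height_steps Vnu (isT : (1 <= 1 <= 2)%N) jr.
  rewrite -[(3 - 1)%N]/2%N; have := Dd 1%N j.+1; have := Dd 2%N j.+1; clearbody d; lia.
have row i j : (1 <= i <= 2)%N -> (j.+1 < n)%N -> `|d i j.+2 - d i j.+1| <= 1.
  move=> ir jn; have [_ + _] := height_steps Vmu ir (ltac:(lia) : (1 <= j.+1 <= n)%N).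
  have [_ + _] := height_steps Vnu ir (ltac:(lia) : (1 <= j.+1 <= n)%N).
  move=> /(_ jn) Snu /(_ jn) Smu; have := Dd i j.+1; have := Dd i j.+2; clearbody d; lia.
pose u j := d 1%N j.+1 + d 2%N j.+1.
have [m Hm] : exists m : int, \sum_(0 <= j < n) `|u j + 2 * m| <= (half_sq_ceil n)%:Z.
  apply: exists_shift_sum_abs_le => // j jn; have := row 1%N j isT jn; have := row 2%N j isT jn.
  by rewrite /u; lia.
exists m; rewrite height_gap_columns.
apply: le_trans (_ : \sum_(0 <= j < n) 2 * `|u j + 2 * m| <= _).
  2: by rewrite -mulr_sumr ler_pM2l.
apply: ler_sum_nat => j jn /=; have := col j (ltac:(lia)); rewrite /height_diff /u.
by have := Dd 1%N j.+1; have := Dd 2%N j.+1; clearbody d; lia.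
Qed.

(** * Assignments of degree 2 *)

Definition column_flips n mu j : nat := ((flippable n mu 1 j : nat) + flippable n mu 2 j)%N.
Arguments column_flips : simpl never.

Lemma ofg_degree_columns n mu : ofg_degree n mu = (\sum_(0 <= j < n) column_flips n mu j.+1)%N.
Proof. by rewrite /ofg_degree big_mkord big_ord_recr big_ord_recr big_ord0 /= -big_split. Qed.

Lemma flippable_of_steps n mu i j s : locally_valid n mu ->
  (1 <= i <= 2)%N -> (1 <= j <= n)%N ->
  ((1 < j)%N -> height mu i j.-1 - height mu i j = s) ->
  ((j < n)%N -> height mu i j.+1 - height mu i j = s) ->
  height mu (3 - i) j - height mu i j = s -> flippable n mu i j.
Proof. by move=> V ir jr *; apply/(flippableP V ir jr); exists s. Qed.

Section Columns.

Variables (n : nat) (mu : mv_assignment).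
Hypothesis V : locally_valid n mu.
Local Notation h := (height mu).

Lemma column_flips_first : (2 <= n)%N ->
  (1 <= column_flips n mu 1)%N /\
  ((column_flips n mu 1 <= 1)%N -> h 1 2 - h 1 1 = h 2 2 - h 2 1).
Proof.
move=> n2; have jr : (1 <= 1 <= n)%N by lia.
have [_ /(_ n2) A1 A3] := height_steps V (isT : (1 <= 1 <= 2)%N) jr.
have [_ /(_ n2) B1 _] := height_steps V (isT : (1 <= 2 <= 2)%N) jr.
have [_ _ A3'] := height_steps V (isT : (1 <= 1 <= 2)%N) (ltac:(lia) : (1 <= 2 <= n)%N).
move: A3 A3'; rewrite -[(3 - 1)%N]/2%N => A3 A3'.
have F1 : h 1 2 - h 1 1 = h 2 1 - h 1 1 -> flippable n mu 1 1.
  by move=> e; apply: (flippable_of_steps (s := h 2 1 - h 1 1)).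
have F2 : h 2 2 - h 2 1 = h 1 1 - h 2 1 -> flippable n mu 2 1.
  by move=> e; apply: (flippable_of_steps (s := h 1 1 - h 2 1)).
rewrite /column_flips; case: (flippable n mu 1 1) F1; case: (flippable n mu 2 1) F2 => /= F2 F1.
all: lia.
Qed.

Lemma column_flips_last k : (1 <= k)%N -> n = k.+1 -> (1 <= column_flips n mu k.+1)%N.
Proof.
move=> k1 nk; have jr : (1 <= k.+1 <= n)%N by lia.
have [/(_ k1) A1 _ A3] := height_steps V (isT : (1 <= 1 <= 2)%N) jr.
have [/(_ k1) B1 _ _] := height_steps V (isT : (1 <= 2 <= 2)%N) jr.
have [_ _ A3'] := height_steps V (isT : (1 <= 1 <= 2)%N) (ltac:(lia) : (1 <= k <= n)%N).
move: A1 B1 A3 A3'; rewrite /= -[(3 - 1)%N]/2%N => A1 B1 A3 A3'.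
have F1 : h 1 k - h 1 k.+1 = h 2 k.+1 - h 1 k.+1 -> flippable n mu 1 k.+1.
  by move=> e; apply: (flippable_of_steps (s := h 2 k.+1 - h 1 k.+1)) => //; lia.
have F2 : h 2 k - h 2 k.+1 = h 1 k.+1 - h 2 k.+1 -> flippable n mu 2 k.+1.
  by move=> e; apply: (flippable_of_steps (s := h 1 k.+1 - h 2 k.+1)) => //; lia.
rewrite /column_flips; case: (flippable n mu 1 k.+1) F1; case: (flippable n mu 2 k.+1) F2.
all: by move=> /= F2 F1; lia.
Qed.

Lemma column_flips0_straight k : (1 <= k)%N -> (k.+2 <= n)%N -> column_flips n mu k.+1 = 0%N ->
  [/\ h 1 k.+1 - h 1 k = h 2 k.+1 - h 2 k,
      h 1 k.+2 - h 1 k.+1 = h 1 k.+1 - h 1 k &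
      h 2 k.+2 - h 2 k.+1 = h 2 k.+1 - h 2 k].
Proof.
move=> k1 kn; have jr : (1 <= k.+1 <= n)%N by lia.
have [/(_ k1) A1 /(_ kn) A2 T1] := height_steps V (isT : (1 <= 1 <= 2)%N) jr.
have [/(_ k1) B1 /(_ kn) B2 _] := height_steps V (isT : (1 <= 2 <= 2)%N) jr.
have [_ _ T0] := height_steps V (isT : (1 <= 1 <= 2)%N) (ltac:(lia) : (1 <= k <= n)%N).
have [_ _ T2] := height_steps V (isT : (1 <= 1 <= 2)%N) (ltac:(lia) : (1 <= k.+2 <= n)%N).
move: A1 B1 T0 T1 T2; rewrite /= -[(3 - 1)%N]/2%N => A1 B1 T0 T1 T2.
have F1 : h 1 k - h 1 k.+1 = h 2 k.+1 - h 1 k.+1 -> h 1 k.+2 - h 1 k.+1 = h 2 k.+1 - h 1 k.+1 ->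
    flippable n mu 1 k.+1.
  by move=> e e'; apply: (flippable_of_steps (s := h 2 k.+1 - h 1 k.+1)).
have F2 : h 2 k - h 2 k.+1 = h 1 k.+1 - h 2 k.+1 -> h 2 k.+2 - h 2 k.+1 = h 1 k.+1 - h 2 k.+1 ->
    flippable n mu 2 k.+1.
  by move=> e e'; apply: (flippable_of_steps (s := h 1 k.+1 - h 2 k.+1)).
rewrite /column_flips; case: (flippable n mu 1 k.+1) F1; case: (flippable n mu 2 k.+1) F2 => //.
by move=> /= F2 F1 _; split; lia.
Qed.

End Columns.

(* The two end columns always contain a flippable face, so in degree 2 no interior column does
   and the heights are affine. *)
Lemma degree2_height n mu : (2 <= n)%N -> locally_valid n mu -> ofg_degree n mu = 2%N ->
  exists d t : int, [/\ d = 1 \/ d = -1, t = 1 \/ t = -1 &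
    forall j, (1 <= j <= n)%N ->
      height mu 1 j = d * (j.-1)%:Z /\ height mu 2 j = d * (j.-1)%:Z + t].
Proof.
move=> n2 V deg; have [m nm] : exists m, n = m.+2 by exists (n - 2)%N; lia.
have [G1 G1le] := column_flips_first V n2.
have Gn := column_flips_last V (isT : (1 <= m.+1)%N) nm.
have deg_split : (column_flips n mu 1 + \sum_(1 <= j < m.+1) column_flips n mu j.+1
                  + column_flips n mu m.+2 = 2)%N.
  rewrite -deg ofg_degree_columns nm [RHS]big_ltn //.
  by rewrite [X in (_ = _ + X)%N]big_nat_recr //= addnA.
have inner j : (1 < j < n)%N -> column_flips n mu j = 0%N.
  move=> jr; have /eqP : (\sum_(1 <= j < m.+1) column_flips n mu j.+1 = 0)%N by lia.
  rewrite sum_nat_seq_eq0 => /allP /(_ j.-1); rewrite mem_index_iota prednK; last lia.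
  by move=> /(_ (ltac:(lia))) /eqP.
pose d := height mu 1 2 - height mu 1 1.
have chain k : (1 <= k < n)%N ->
    height mu 1 k.+1 - height mu 1 k = d /\ height mu 2 k.+1 - height mu 2 k = d.
  elim: k => [// | [|k] IH] kr; first by split=> //; apply/esym/G1le; lia.
  have [I1 I2] := IH (ltac:(lia)).
  have [S1 S2 S3] := column_flips0_straight V (isT : (1 <= k.+1)%N) (ltac:(lia))
    (inner k.+2 (ltac:(lia))).
  by split; lia.
have [_ /(_ n2) D _] := height_steps V (isT : (1 <= 1 <= 2)%N) (ltac:(lia) : (1 <= 1 <= n)%N).
have [_ _ T] := height_steps V (isT : (1 <= 1 <= 2)%N) (ltac:(lia) : (1 <= 1 <= n)%N).
exists d, (height mu 2 1 - height mu 1 1); split=> //.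
elim=> [// | [|j] IH] jr; first by rewrite height11 /=; split; ring.
by have [I1 I2] := IH (ltac:(lia)); have [c1 c2] := chain j.+1 (ltac:(lia)); split; lia.
Qed.

Lemma sum_abs_center n : \sum_(0 <= j < n) `|n%:Z - 2 * j%:Z| = (half_sq_ceil n)%:Z.
Proof.
have [p [-> | ->]] : exists p, n = p.*2 \/ n = p.*2.+1.
  by exists n./2; rewrite -{1 3}(odd_double_half n); case: (odd n); [right | left].
- rewrite -addnn (_ : half_sq_ceil _ = p * p.+1 + p * p.-1)%N; last by rewrite /half_sq_ceil; nia.
  by rewrite -sum_abs_even; apply: eq_big_nat => j jr; lia.
- rewrite (_ : p.*2.+1 = p.+1 + p)%N; last lia.
  rewrite (_ : half_sq_ceil _ = p.+1 ^ 2 + p ^ 2)%N; last by rewrite /half_sq_ceil; nia.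
  by rewrite -sum_abs_odd; apply: eq_big_nat => j jr; lia.
Qed.

(* Pairing column [j] of the first sum with column [n - 1 - j] of the second, the triangle
   inequality leaves [2 |n - 1 - 2j + d t|], whose sum is [2 ceil(n^2/2)] for either sign of
   [d t]. *)
Lemma affine_gap_lb n (d t H : int) : d = 1 \/ d = -1 -> t = 1 \/ t = -1 ->
  2 * (half_sq_ceil n)%:Z
  <= \sum_(0 <= j < n) (`|H - 2 * d * j%:Z| + `|H - 2 * d * j%:Z - 2 * t|).
Proof.
move=> Hd Ht; rewrite -sum_abs_center mulr_sumr.
have center_rev : \sum_(0 <= j < n) 2 * `|n%:Z - 2 * j%:Z|
    = \sum_(0 <= j < n) 2 * `|n%:Z - 2 - 2 * j%:Z|.
  by rewrite big_nat_rev; apply: eq_big_nat => j jr; rewrite add0n; lia.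
rewrite big_split /= [X in _ <= _ + X]big_nat_rev -big_split /=.
case: Hd => ->; case: Ht => ->; [| rewrite center_rev | rewrite center_rev |].
all: by apply: ler_sum_nat => j jr; rewrite add0n; lia.
Qed.

Lemma degree2_opposite_walk_lb n mu k : (2 <= n)%N -> locally_valid n mu ->
  ofg_degree n mu = 2%N -> ofg_walk n k mu (opposite mu) -> (half_sq_ceil n <= k)%N.
Proof.
move=> n2 V deg W; have [H gapH] := ofg_walk_height_gap V W.
have [d [t [pd pt affine]]] := degree2_height n2 V deg.
suff : 2 * (half_sq_ceil n)%:Z <= height_gap n mu (opposite mu) H by lia.
apply: le_trans (affine_gap_lb n H pd pt) _; rewrite height_gap_columns le_eqVlt.
apply/orP; left; apply/eqP/eq_big_nat => j jr; rewrite /height_diff !height_opposite.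
by have [-> ->] := affine j.+1 (ltac:(lia)); rewrite /=; congr (_ + _); apply: congr1; ring.
Qed.

(* Valley folds exactly on the bottom row (creases e_{3k+1}): the heights are [j + i - 2], so only
   the faces alpha_{1,1} and alpha_{2,n} are extremal. *)
Definition ramp : mv_assignment := fun e => (e %% 3 != 1)%N.

Lemma ramp_locally_valid n : locally_valid n ramp.
Proof.
apply/locally_validP=> k kr; rewrite /ramp.
have -> : ((3 * k - 1) %% 3 != 1)%N by lia.
have -> : ((3 * k) %% 3 != 1)%N by lia.
have -> : ((3 * k + 1) %% 3 != 1)%N = false by lia.
by have -> : ((3 * k - 3) %% 3 != 1)%N by lia.
Qed.

Lemma height_ramp n i j : (1 <= i <= 2)%N -> (1 <= j <= n)%N ->
  height ramp i j = j%:Z + i%:Z - 2.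
Proof.
move=> ir jr; have R : is_height n ramp (fun i j => j%:Z + i%:Z - 2).
{ split=> k kr; rewrite /ramp.
  - by rewrite (_ : ((3 * k - 1) %% 3 != 1)%N = true) /=; lia.
  - by rewrite (_ : ((3 * k - 3) %% 3 != 1)%N = true) /=; lia.
  - by rewrite (_ : ((3 * k + 1) %% 3 != 1)%N = false) /=; lia. }
by rewrite -(is_height_unique R ir jr) /=; ring.
Qed.

Lemma flippable_ramp n i j : (1 <= i <= 2)%N -> (1 <= j <= n)%N ->
  flippable n ramp i j = if i == 1%N then j == 1%N else j == n.
Proof.
move=> ir; case: j => [// | k] jr; have V := ramp_locally_valid n.
have h1 := @height_ramp n 1 k; have h2 := @height_ramp n 1 k.+1.
have h3 := @height_ramp n 1 k.+2; have h4 := @height_ramp n 2 k.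
have h5 := @height_ramp n 2 k.+1; have h6 := @height_ramp n 2 k.+2.
have [? | ?] : (i = 1 \/ i = 2)%N by lia.
all: subst i; rewrite -?[(3 - 1)%N]/2%N -?[(3 - 2)%N]/1%N /=.
all: apply/idP/idP => [/(flippableP V ir jr)[s [/= A B C]] | /eqP Ej].
- by move: C; rewrite -[(3 - 1)%N]/2%N; lia.
- apply/(flippableP V ir jr); exists 1.
  by split=> //=; rewrite -?[(3 - 1)%N]/2%N; lia.
- by move: C; rewrite -[(3 - 2)%N]/1%N; lia.
- apply/(flippableP V ir jr); exists (-1).
  by split=> //=; rewrite -?[(3 - 2)%N]/1%N; lia.
Qed.

Lemma ofg_degree_ramp n : (2 <= n)%N -> ofg_degree n ramp = 2%N.
Proof.
move=> n2; have [m nm] : exists m, n = m.+2 by exists (n - 2)%N; lia.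
have flips j : (1 <= j <= n)%N -> column_flips n ramp j = ((j == 1%N) + (j == n))%N.
  by move=> jr; rewrite /column_flips !flippable_ramp.
rewrite ofg_degree_columns nm big_ltn // big_nat_recr //= -nm !flips; try lia.
rewrite (eq_big_nat _ _ (F2 := fun => 0%N)) ?sum_nat_const_nat ?muln0; last first.
  by move=> j jr; rewrite flips; lia.
lia.
Qed.

(** * Colorings *)

Definition coloring_of (mu : mv_assignment) : coloring := fun i j => (height mu i j)%:~R.

Lemma z3_of_mv_val b : (mv_val b)%:~R = z3_of b.
Proof. by case: b. Qed.

Lemma coloring_of_step mu a b c d e : height mu c d - height mu a b = mv_val e ->
  coloring_of mu c d = coloring_of mu a b + z3_of e.
Proof. by move=> E; rewrite /coloring_of -z3_of_mv_val -intrD -E addrC subrK. Qed.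

Lemma coloring_of_corresponds n mu : (1 <= n)%N -> locally_valid n mu ->
  corresponds n (coloring_of mu) mu.
Proof.
move=> n1 V; have [R1 R2 R3] := height_is_height V; split; [|split].
- by move=> j jr; apply/coloring_of_step/R1; lia.
- by apply/coloring_of_step/R2; lia.
- move=> j jr; apply: coloring_of_step.
  have := R3 j.-1 (ltac:(lia)); rewrite prednK; last lia.
  by rewrite (_ : (3 * j.-1 + 1 = 3 * j - 2)%N) //; lia.
Qed.

Lemma coloring_of_proper n mu : locally_valid n mu -> proper_coloring n (coloring_of mu).
Proof.
have neq (x : 'Z_3) b : x != x + z3_of b.
  by rewrite eq_sym -subr_eq0 addrAC subrr add0r; case: b.
move=> V; have [R1 R2 R3] := height_is_height V; split=> [i j ir j1 jn | j jr].
- have [-> | ->] : (i = 1 \/ i = 2)%N by lia.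
    by rewrite (coloring_of_step (R1 j (ltac:(lia)))) neq.
  by rewrite (coloring_of_step (R3 j (ltac:(lia)))) eq_sym neq.
- by rewrite (coloring_of_step (R2 j jr)) neq.
Qed.

Lemma edge_weight_step (g : coloring) a1 a2 b1 b2 e : g b1 b2 = g a1 a2 + z3_of e ->
  edge_weight g a1 a2 b1 b2 = mv_val e.
Proof. by rewrite /edge_weight => ->; rewrite addrC addKr; case: e. Qed.

Lemma path_weight_coloring_of n mu i j : locally_valid n mu ->
  (1 <= i <= 2)%N -> (1 <= j <= n)%N -> path_weight (coloring_of mu) i j = height mu i j.
Proof.
move=> V ir jr; have [R1 R2 _] := height_is_height V; rewrite /path_weight /height.
congr (_ + _).
  by apply: eq_big_nat => k kr; apply/edge_weight_step/coloring_of_step/R1; lia.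
by case: ifP => // _; apply/edge_weight_step/coloring_of_step/R2.
Qed.

Lemma height_cost_coloring_of n mu nu H (c : int) :
  locally_valid n mu -> locally_valid n nu -> height_gap n mu nu H <= 2 * c ->
  height_cost n (coloring_of mu) (coloring_of nu) H <= c%:~R.
Proof.
move=> Vmu Vnu gap_le; rewrite /height_cost mul1r mulrC ler_pdivrMr //.
rewrite -[(2 : rat)]/(2%:~R) -intrM ler_int mulrC (le_trans _ gap_le) // le_eqVlt.
rewrite /height_gap -(pair_bigA _ (fun (i : 'I_2) (j : 'I_n) =>
  `|height_diff mu nu H i.+1 j.+1|)).
apply/orP; left; apply/eqP/eq_bigr=> i _; apply: eq_bigr=> j _.
have [ir jr] := ord_vertex (i, j).
by rewrite /rel_height !(path_weight_coloring_of _ ir jr) // /height_diff addrA.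
Qed.

Local Close Scope ring_scope.
Unset Implicit Arguments.

Theorem theorem5p8 (n : nat) (hn : 2 <= n) :
  (forall mu1 mu2 : mv_assignment,
     locally_valid n mu1 -> locally_valid n mu2 ->
     exists (g b : coloring),
       [/\ proper_coloring n g, corresponds n g mu1,
           proper_coloring n b, corresponds n b mu2 &
           exists H : int, (2 %| H)%Z /\
             (height_cost n g b H <= (ceil_half_sq n)%:~R)%R]) /\
  (forall mu1 mu2 : mv_assignment,
     locally_valid n mu1 -> locally_valid n mu2 ->
     ofg_dist_le n mu1 mu2 `|ceil_half_sq n|%N) /\
  (forall mu : mv_assignment, locally_valid n mu -> ofg_degree n mu = 2 ->
     ofg_dist n mu (opposite mu) `|ceil_half_sq n|%N) /\
  (exists mu : mv_assignment, locally_valid n mu /\ ofg_degree n mu = 2).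
Proof.
have n1 : 1 <= n by lia.
have dist_le mu1 mu2 : locally_valid n mu1 -> locally_valid n mu2 ->
    ofg_dist_le n mu1 mu2 `|ceil_half_sq n|%N.
  move=> V1 V2; have [m gap_m] := exists_height_gap_le hn V1 V2.
  by have [k k_le W] := height_gap_ofg_walk n1 V2 V1 gap_m; exists k; rewrite ceil_half_sqE.
split; [|split; [exact: dist_le | split]].
- move=> mu1 mu2 V1 V2; exists (coloring_of mu1), (coloring_of mu2).
  split; try exact: coloring_of_proper; try exact: coloring_of_corresponds.
  have [m gap_m] := exists_height_gap_le hn V1 V2.
  by exists (2 * m)%R; rewrite dvdz_mulr ?ceil_half_sqE ?(height_cost_coloring_of _ _ gap_m).
- move=> mu V deg; split; first exact: dist_le (locally_valid_opposite V).
  by move=> k W; rewrite ceil_half_sqE; exact: degree2_opposite_walk_lb W.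
- by exists ramp; split; [exact: ramp_locally_valid | exact: ofg_degree_ramp].
Qed.
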